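(* Let $\Theta\subseteq\mathbb{R}^p$ be open and $\rho_\theta=|\psi_\theta\rangle\langle\psi_\theta|$, $\theta=(\theta^1,\dots,\theta^p)\in\Theta$, a non-degenerate differentiable family of pure states on $\mathbb{C}^d$. If at some $\theta$ there exists a POVM $M$ with $F^M_\theta=H_\theta$ (i.e. $H_\theta$ is attainable), then $p\le d-1$.
   Context: Non-degenerate means that for each $\theta$ the matrices $\partial\rho_\theta/\partial\theta^1,\dots,\partial\rho_\theta/\partial\theta^p$ are linearly independent over $\mathbb{R}$. $H_\theta$ is the SLD quantum information matrix, $(H_\theta)_{jk}=\mathrm{Re}\,\mathrm{tr}\{\lambda^j\rho_\theta\lambda^k\}$ with $\lambda^j$ Hermitian solving $\frac{\partial\rho_\theta}{\partial\theta^j}=\frac12(\rho_\theta\lambda^j+\lambda^j\rho_\theta)$. A POVM is a finite family $M=\{M_m\}$ of positive semidefinite matrices summing to $\mathbb{I}$; with $p(m;\theta)=\mathrm{tr}\{\rho_\theta M_m\}$, its Fisher information matrix is $(F^M_\theta)_{jk}=\sum_{m:p(m;\theta)>0}\frac{1}{p(m;\theta)}\frac{\partial p(m;\theta)}{\partial\theta^j}\frac{\partial p(m;\theta)}{\partial\theta^k}$. *)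

From HB Require Import structures.
From mathcomp Require Import all_boot all_order all_algebra.
From mathcomp Require Import complex.
From mathcomp Require Import all_classical all_reals all_analysis.
Set Implicit Arguments. Unset Strict Implicit. Unset Printing Implicit Defensive.
Import Order.TTheory GRing.Theory Num.Theory.
Import numFieldNormedType.Exports.
Local Open Scope ring_scope.
Local Open Scope classical_set_scope.
Local Open Scope complex_scope.

Section QDefs.
Variable R : realType.
Local Notation C := R[i].

Definition adj (m n : nat) (A : 'M[C]_(m, n)) : 'M[C]_(n, m) :=
  (map_mx (@conjc R) A)^T.

Definition hermitian (d : nat) (A : 'M[C]_d) : Prop := adj A = A.

(* positive semidefinite: <v, A v> >= 0 (in the order of C, i.e. real & nonneg) *)
Definition psd (d : nat) (A : 'M[C]_d) : Prop :=
  forall v : 'cV[C]_d, 0 <= (adj v *m A *m v) 0 0.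

Definition POVM (d n : nat) (M : 'I_n -> 'M[C]_d) : Prop :=
  (forall m, psd (M m)) /\ \sum_(m < n) M m = 1%:M.

Definition edir (p : nat) (j : 'I_p) : 'rV[R]_p := delta_mx 0 j.

Definition mpartial (p m n : nat) (F : 'rV[R]_p -> 'M[C]_(m, n)) (j : 'I_p)
  (t : 'rV[R]_p) : 'M[C]_(m, n) :=
  \matrix_(a, b)
    ((('D_(edir j) (fun s : 'rV[R]_p => complex.Re (F s a b)) t)%:C : C) +
     'i * (('D_(edir j) (fun s : 'rV[R]_p => complex.Im (F s a b)) t)%:C)).

Definition cdifferentiable_at (p d : nat) (psi : 'rV[R]_p -> 'cV[C]_d)
  (t : 'rV[R]_p) : Prop :=
  forall a : 'I_d, differentiable (fun s : 'rV[R]_p => complex.Re (psi s a 0)) t /\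
                   differentiable (fun s : 'rV[R]_p => complex.Im (psi s a 0)) t.

Definition proj_state (p d : nat) (psi : 'rV[R]_p -> 'cV[C]_d) (t : 'rV[R]_p)
  : 'M[C]_d := psi t *m adj (psi t).

Definition R_lin_indep (p d : nat) (D : 'I_p -> 'M[C]_d) : Prop :=
  forall c : 'I_p -> R, \sum_(j < p) ((c j)%:C : C) *: D j = 0 ->
    forall j, c j = 0.

Definition is_SLD (p d : nat) (rho : 'rV[R]_p -> 'M[C]_d) (t : 'rV[R]_p)
  (j : 'I_p) (L : 'M[C]_d) : Prop :=
  hermitian L /\
  mpartial rho j t = (2%:R)^-1 *: (rho t *m L + L *m rho t).

Definition SLD_info (p d : nat) (rho : 'M[C]_d) (L : 'I_p -> 'M[C]_d)
  : 'M[R]_p :=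
  \matrix_(j, k) complex.Re (\tr (L j *m rho *m L k)).

(* outcome probability p(m; t) = tr(rho_t M_m) (real for a state and a POVM) *)
Definition outcome_prob (p d n : nat) (rho : 'rV[R]_p -> 'M[C]_d)
  (M : 'I_n -> 'M[C]_d) (m : 'I_n) (t : 'rV[R]_p) : R :=
  complex.Re (\tr (rho t *m M m)).

Definition fisher_info (p d n : nat) (rho : 'rV[R]_p -> 'M[C]_d)
  (M : 'I_n -> 'M[C]_d) (t : 'rV[R]_p) : 'M[R]_p :=
  \matrix_(j, k)
    \sum_(m < n | 0 < outcome_prob rho M m t)
      (outcome_prob rho M m t)^-1 *
      'D_(edir j) (outcome_prob rho M m) t *
      'D_(edir k) (outcome_prob rho M m) t.

End QDefs.

(* Write [l_j := L_j psi].  The SLD equation reads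
   [d_j rho = (psi l_j^* + l_j psi^* ) / 2], so the constancy of [<psi, psi>]
   gives [<psi, l_j> = 0], and non-degeneracy makes the [l_j] linearly
   independent over the reals.  By Cauchy-Schwarz, outcome [m] contributes at
   most [<l_j, M_m l_j>] to [F_jj], while [H_jj] is the sum of these bounds;
   attainability therefore forces equality outcome by outcome, which makes the
   Gram matrix [<l_j, l_k>] real.  A real Gram matrix upgrades real to complex
   independence, so [psi, l_1, ..., l_p] are [p + 1] independent vectors of
   [C^d]. *)

From HB Require Import structures.
From mathcomp Require Import all_boot all_order all_algebra.
From mathcomp Require Import complex.
From mathcomp Require Import all_classical all_reals all_analysis.
From mathcomp Require Import lra ring.
Import Order.TTheory GRing.Theory Num.Theory.
Import numFieldNormedType.Exports.
Local Open Scope ring_scope.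
Local Open Scope classical_set_scope.
Set Implicit Arguments. Unset Strict Implicit. Unset Printing Implicit Defensive.
Local Open Scope complex_scope.
Local Notation Re := complex.Re.
Local Notation Im := complex.Im.

Section Adjoint.
Variable R : realType.
Implicit Types m n k : nat.

Lemma adjE m n (A : 'M[R[i]]_(m, n)) i j : adj A i j = (A j i)^*.
Proof. by rewrite !mxE. Qed.

Lemma adjD m n (A B : 'M[R[i]]_(m, n)) : adj (A + B) = adj A + adj B.
Proof. by apply/matrixP => i j; rewrite !mxE rmorphD. Qed.

Lemma adjZ m n (c : R[i]) (A : 'M[R[i]]_(m, n)) : adj (c *: A) = c^* *: adj A.
Proof. by apply/matrixP => i j; rewrite !mxE rmorphM. Qed.

Lemma adjM m n k (A : 'M[R[i]]_(m, n)) (B : 'M[R[i]]_(n, k)) :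
  adj (A *m B) = adj B *m adj A.
Proof. by rewrite /adj map_mxM trmx_mul. Qed.

Lemma adjK m n (A : 'M[R[i]]_(m, n)) : adj (adj A) = A.
Proof. by apply/matrixP => i j; rewrite !mxE conjcK. Qed.

Lemma adj0 m n : adj (0 : 'M[R[i]]_(m, n)) = 0.
Proof. by apply/matrixP => i j; rewrite !mxE rmorph0. Qed.

Lemma adj_sum m n k (F : 'I_k -> 'M[R[i]]_(m, n)) :
  adj (\sum_(l < k) F l) = \sum_(l < k) adj (F l).
Proof.
apply/matrixP => i j; rewrite !mxE !summxE rmorph_sum.
by apply: eq_bigr => l _; rewrite !mxE.
Qed.

End Adjoint.

Section MatrixForm.
Variables (R : realType) (d : nat).
Implicit Types (A : 'M[R[i]]_d) (u v w : 'cV[R[i]]_d).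

Definition mxform A u w : R[i] := (adj u *m A *m w) 0 0.

Lemma mxformDl A u v w : mxform A (u + v) w = mxform A u w + mxform A v w.
Proof. by rewrite /mxform adjD !mulmxDl mxE. Qed.

Lemma mxformDr A u v w : mxform A w (u + v) = mxform A w u + mxform A w v.
Proof. by rewrite /mxform !mulmxDr mxE. Qed.

Lemma mxformZl A c u w : mxform A (c *: u) w = c^* * mxform A u w.
Proof. by rewrite /mxform adjZ -!scalemxAl mxE. Qed.

Lemma mxformZr A c u w : mxform A u (c *: w) = c * mxform A u w.
Proof. by rewrite /mxform -!scalemxAr mxE. Qed.

Lemma mxformNr A u w : mxform A u (- w) = - mxform A u w.
Proof. by rewrite -scaleN1r mxformZr mulN1r. Qed.

Lemma mxformBr A u v w : mxform A w (u - v) = mxform A w u - mxform A w v.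
Proof. by rewrite mxformDr mxformNr. Qed.

Lemma mxformBl A u v w : mxform A (u - v) w = mxform A u w - mxform A v w.
Proof. by rewrite mxformDl -scaleN1r mxformZl rmorphN1 mulN1r. Qed.

Lemma mxform_suml A n (u : 'I_n -> 'cV[R[i]]_d) w :
  mxform A (\sum_(m < n) u m) w = \sum_(m < n) mxform A (u m) w.
Proof. by rewrite /mxform adj_sum !mulmx_suml summxE. Qed.

Lemma mxform_sumr A n u (w : 'I_n -> 'cV[R[i]]_d) :
  mxform A u (\sum_(m < n) w m) = \sum_(m < n) mxform A u (w m).
Proof. by rewrite /mxform mulmx_sumr summxE. Qed.

Lemma mxform_sum n (A : 'I_n -> 'M[R[i]]_d) u w :
  mxform (\sum_(m < n) A m) u w = \sum_(m < n) mxform (A m) u w.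
Proof. by rewrite /mxform mulmx_sumr mulmx_suml summxE. Qed.

Lemma conj_mxform A u w : (mxform A u w)^* = mxform (adj A) w u.
Proof. by rewrite /mxform -adjE !adjM adjK mulmxA. Qed.

End MatrixForm.

Lemma quadratic_ge0_lin_coef0 (R : realFieldType) (r c : R) :
  0 <= c -> (forall s, 0 <= s * r + s ^+ 2 * c) -> r = 0.
Proof.
move=> c0 h; have c1 : 0 < c + 1 by rewrite ltr_wpDl.
have := h (- r / (c + 1)).
have -> : - r / (c + 1) * r + (- r / (c + 1)) ^+ 2 * c = - (r ^+ 2 / (c + 1) ^+ 2).
  by field; rewrite gt_eqF.
rewrite oppr_ge0 pmulr_lle0 ?invr_gt0 ?exprn_gt0 // => r2.
by apply/eqP; rewrite -sqrf_eq0 eq_le r2 sqr_ge0.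
Qed.

Definition fisher_term (R : numFieldType) (P a : R) : R :=
  if 0 < P then P^-1 * a * a else 0.

Section PositiveSemidefinite.
Variables (R : realType) (d : nat) (A : 'M[R[i]]_d).
Hypothesis psdA : psd A.
Implicit Types (u v w : 'cV[R[i]]_d).

Lemma psd_Im_mxform u : Im (mxform A u u) = 0.
Proof.
have := psdA u; rewrite -/(mxform A u u).
by case: (mxform A u u) => x y; rewrite lecE /= => /andP[/eqP].
Qed.

Lemma psd_Re_mxform_ge0 u : 0 <= Re (mxform A u u).
Proof.
have := psdA u; rewrite -/(mxform A u u).
by case: (mxform A u u) => x y; rewrite lecE /= => /andP[].
Qed.

Lemma psd_mxform_real u : mxform A u u = (Re (mxform A u u))%:C.
Proof. by rewrite [LHS]complexE psd_Im_mxform mulr0 addr0. Qed.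

Lemma psd_mxformC u w : mxform A u w = (mxform A w u)^*.
Proof.
have := psd_Im_mxform u; have := psd_Im_mxform w.
have := psd_Im_mxform (u + w); have := psd_Im_mxform (u + 'i *: w).
rewrite !(mxformDl, mxformDr, mxformZl, mxformZr).
move: (mxform A u u) (mxform A w w) (mxform A u w) (mxform A w u).
move=> [a1 a2] [b1 b2] [x1 x2] [y1 y2]; simpc => /= hi hs hw hu.
by apply/eqP; rewrite eq_complex /=; apply/andP; split; apply/eqP; lra.
Qed.

Lemma psd_mxform_null w : mxform A w w = 0 -> forall u, mxform A u w = 0.
Proof.
move=> w0 u; set c := Re (mxform A u u).
have key k : 0 <= Re (k * (mxform A u w)^* + k^* * mxform A u w + k^* * k * c%:C).
  have := psd_Re_mxform_ge0 (w + k *: u).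
  rewrite !(mxformDl, mxformDr, mxformZl, mxformZr) w0 (psd_mxformC w u).
  by rewrite [mxform A u u]psd_mxform_real -/c; congr (_ <= Re _); ring.
have c0 : 0 <= c by exact: psd_Re_mxform_ge0.
move: key; case: (mxform A u w) => z1 z2 key.
have z1_0 : z1 + z1 = 0.
  by apply: (quadratic_ge0_lin_coef0 c0) => s; have := key s%:C; simpc => /=; lra.
have z2_0 : z2 + z2 = 0.
  by apply: (quadratic_ge0_lin_coef0 c0) => s; have := key (Complex 0 s); simpc => /=; lra.
by apply/eqP; rewrite eq_complex /=; apply/andP; split; apply/eqP; lra.
Qed.

(* Cauchy-Schwarz with its remainder term. *)
Lemma psd_mxform_residual v w (l := mxform A v w / mxform A v v) :
  0 < Re (mxform A v v) ->
  Re (mxform A (w - l *: v) (w - l *: v)) =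
  Re (mxform A w w) -
    (Re (mxform A v w) ^+ 2 + Im (mxform A v w) ^+ 2) / Re (mxform A v v).
Proof.
move=> P0; rewrite !(mxformBl, mxformBr, mxformZl, mxformZr) (psd_mxformC w v) /l.
move: (psd_Im_mxform v) (psd_Im_mxform w) P0.
move: (mxform A v v) (mxform A w w) (mxform A v w) => [p1 p2] [q1 q2] [a1 a2] /= -> _ P0.
by rewrite expr0n /= addr0; field; rewrite gt_eqF.
Qed.

Lemma psd_fisher_term_le v w :
  fisher_term (Re (mxform A v v)) (Re (mxform A v w)) <= Re (mxform A w w).
Proof.
rewrite /fisher_term; case: ifPn => [P0|_]; last exact: psd_Re_mxform_ge0.
set l := mxform A v w / mxform A v v.
have := psd_Re_mxform_ge0 (w - l *: v); rewrite psd_mxform_residual //.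
have : 0 <= Im (mxform A v w) ^+ 2 / Re (mxform A v v) by rewrite divr_ge0 ?sqr_ge0 ?ltW.
by rewrite mulrDl; lra.
Qed.

Lemma psd_fisher_term_eq v w :
  fisher_term (Re (mxform A v v)) (Re (mxform A v w)) = Re (mxform A w w) ->
  exists l : R, forall u, mxform A u w = l%:C * mxform A u v.
Proof.
rewrite /fisher_term; case: ifPn => [P0 equal|_ equal]; last first.
  by exists 0 => u; rewrite mul0r; apply: psd_mxform_null; rewrite psd_mxform_real -equal.
set l := mxform A v w / mxform A v v.
have res := psd_mxform_residual w P0; rewrite -/l -equal in res.
have Im0 : Im (mxform A v w) = 0.
  have := psd_Re_mxform_ge0 (w - l *: v); rewrite res mulrDl => ge0.
  have : 0 <= - (Im (mxform A v w) ^+ 2 / Re (mxform A v v)) by lra.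
  rewrite oppr_ge0 pmulr_lle0 ?invr_gt0 // => sq.
  by apply/eqP; rewrite -sqrf_eq0 eq_le sq sqr_ge0.
have null : mxform A (w - l *: v) (w - l *: v) = 0.
  rewrite psd_mxform_real res Im0 expr0n /= addr0.
  by apply/eqP; rewrite eq_complex /= eqxx andbT; apply/eqP; field; rewrite gt_eqF.
exists (Re (mxform A v w) / Re (mxform A v v)) => u.
have := psd_mxform_null null u; rewrite mxformBr mxformZr => /eqP.
rewrite subr_eq0 => /eqP ->; congr (_ * _); rewrite /l.
move: (psd_Im_mxform v) Im0 P0.
move: (mxform A v v) (mxform A v w) => [p1 p2] [a1 a2] /= -> -> P0.
by simpc; rewrite expr0n addr0; congr Complex; field; rewrite gt_eqF.
Qed.

End PositiveSemidefinite.

Section Gram.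
Variables (R : realType) (d p : nat).
Implicit Types (u v : 'cV[R[i]]_d) (w : 'I_p -> 'cV[R[i]]_d).

Definition R_free w :=
  forall c : 'I_p -> R, \sum_(j < p) (c j)%:C *: w j = 0 -> forall j, c j = 0.

Definition C_free w :=
  forall c : 'I_p -> R[i], \sum_(j < p) c j *: w j = 0 -> forall j, c j = 0.

Lemma psd1 : psd (1%:M : 'M[R[i]]_d).
Proof.
move=> u; rewrite mulmx1 mxE; apply: sumr_ge0 => a _.
by rewrite !mxE mulrC mulcJ_ge0.
Qed.

Lemma mxform1_delta u a : mxform 1%:M (delta_mx a 0) u = u a 0.
Proof.
rewrite /mxform mulmx1 mxE (bigD1 a) //= big1 => [|b ba].
  by rewrite !mxE !eqxx /= oppr0 mul1r addr0.
by rewrite !mxE (negbTE ba) /= oppr0 mul0r.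
Qed.

Lemma mxform1_eq0 u : mxform 1%:M u u = 0 -> u = 0.
Proof.
move=> u0; apply/matrixP => a b; rewrite ord1 mxE -mxform1_delta.
exact: (psd_mxform_null psd1 u0).
Qed.

(* Split the coefficients into real and imaginary parts [u + i v = 0]; a real
   Gram matrix makes [<u, u> = -i <u, v>] both real and imaginary. *)
Lemma real_gram_C_free w :
  (forall j k, Im (mxform 1%:M (w j) (w k)) = 0) -> R_free w -> C_free w.
Proof.
move=> gram free c hc.
pose x j := Re (c j); pose y j := Im (c j).
set u := \sum_(j < p) (x j)%:C *: w j; set v := \sum_(j < p) (y j)%:C *: w j.
have uv : u + 'i *: v = 0.
  rewrite -hc /u /v scaler_sumr -big_split; apply: eq_bigr => j _ /=.
  by rewrite scalerA -scalerDl /x /y -complexE.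
have gram_uv : Im (mxform 1%:M u v) = 0.
  rewrite mxform_suml raddf_sum big1 // => k _.
  rewrite mxformZl mxform_sumr mulr_sumr raddf_sum big1 // => j _.
  by rewrite mxformZr; move: (gram k j); case: (mxform 1%:M _ _) => f1 f2 /= ->; simpc.
have u0 : u = 0.
  apply: mxform1_eq0; rewrite (psd_mxform_real psd1 u).
  have {2}-> : u = - ('i *: v) by apply/eqP; rewrite -addr_eq0 uv.
  by rewrite mxformNr mxformZr; move: gram_uv; case: (mxform 1%:M u v) => f1 f2 /= ->; simpc.
have v0 : v = 0.
  move: uv; rewrite u0 add0r => /eqP; rewrite scaler_eq0 => /orP[|/eqP //].
  by rewrite eq_complex /= oner_eq0 andbF.
move=> j; rewrite [c j]complexE -/(x j) -/(y j).
by rewrite (free x u0) (free y v0) mulr0 addr0.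
Qed.

Lemma orthogonal_C_free_lt v w :
  v != 0 -> (forall j, mxform 1%:M v (w j) = 0) -> C_free w -> (p < d)%N.
Proof.
move=> v0 ortho free.
pose A : 'M[R[i]]_(1 + p, d) := col_mx v^T (\matrix_(j, a) w j a 0).
suff : row_free A by rewrite -row_leq_rank => /leq_trans; apply; exact: rank_leq_col.
apply/inj_row_free => c hc.
set al := c 0 (lshift p 0); pose be j := c 0 (rshift 1 j).
have comb : al *: v + \sum_(j < p) be j *: w j = 0.
  apply/matrixP => a b; rewrite ord1 !mxE summxE.
  have := congr1 (fun B : 'M[R[i]]_(1, d) => B 0 a) hc.
  rewrite !mxE big_split_ord /= big_ord1 col_mxEu !mxE => e.
  apply: etrans e; congr (_ + _).
  by apply: eq_bigr => j _; rewrite [LHS]mxE /A col_mxEd mxE.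
have al0 : al = 0.
  have := congr1 (mxform 1%:M v) comb; rewrite mxformDr mxformZr mxform_sumr.
  rewrite big1 => [|j _]; last by rewrite mxformZr ortho mulr0.
  rewrite addr0 {2}/mxform mulmx0 mxE => /eqP; rewrite mulf_eq0 => /orP[/eqP //|].
  by move/eqP/mxform1_eq0/eqP; rewrite (negbTE v0).
have be0 : forall j, be j = 0.
  by apply: free; move: comb; rewrite al0 scale0r add0r.
apply/rowP => k; rewrite mxE -(splitK k); case: (fintype.split k) => [k0|k1] /=.
  by rewrite ord1 -/al al0.
by rewrite -/(be k1) be0.
Qed.

End Gram.

Section TraceDerivative.
Variables (R : realType) (p d : nat).

Lemma trace_cV_mulmx (u : 'cV[R[i]]_d) (v : 'rV[R[i]]_d) : \tr (u *m v) = (v *m u) 0 0.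
Proof. by rewrite mxtrace_mulC trace_mx11. Qed.

Lemma Re_trace_mulmx (X M : 'M[R[i]]_d) :
  Re (\tr (X *m M)) =
  \sum_(a < d) \sum_(b < d) (Re (X a b) * Re (M b a) - Im (X a b) * Im (M b a)).
Proof.
rewrite /mxtrace raddf_sum; apply: eq_bigr => a _; rewrite mxE raddf_sum.
by apply: eq_bigr => b _; case: (X a b) => x1 x2; case: (M b a) => y1 y2.
Qed.

Lemma derive_Re_trace (F : 'rV[R]_p -> 'M[R[i]]_d) (M : 'M[R[i]]_d) t j :
  (forall a b, derivable (fun s => Re (F s a b)) t (edir R j) /\
               derivable (fun s => Im (F s a b)) t (edir R j)) ->
  'D_(edir R j) (fun s => Re (\tr (F s *m M))) t = Re (\tr (mpartial F j t *m M)).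
Proof.
move=> dF.
have -> : (fun s => Re (\tr (F s *m M))) = \sum_(a < d) \sum_(b < d)
    (Re (M b a) \*: (fun s => Re (F s a b)) - Im (M b a) \*: (fun s => Im (F s a b))).
  apply/funext => s; rewrite Re_trace_mulmx fct_sumE; apply: eq_bigr => a _.
  rewrite fct_sumE; apply: eq_bigr => b _.
  by rewrite (mulrC (Re (F s a b))) (mulrC (Im (F s a b))) !fctE.
rewrite derive_sum => [|a]; last first.
  by apply: derivable_sum => b; have [dRe dIm] := dF a b; apply: derivableB; apply: derivableZ.
rewrite Re_trace_mulmx; apply: eq_bigr => a _.
rewrite derive_sum => [|b]; last first.
  by have [dRe dIm] := dF a b; apply: derivableB; apply: derivableZ.
apply: eq_bigr => b _; have [dRe dIm] := dF a b.
rewrite deriveB; [|exact: derivableZ|exact: derivableZ].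
rewrite !deriveZ // /mpartial !mxE /= ?mul0r ?mul1r ?subr0 ?add0r ?addr0.
by rewrite (mulrC _ (Re (M b a))) (mulrC _ (Im (M b a))).
Qed.

Lemma proj_state_entry (psi : 'rV[R]_p -> 'cV[R[i]]_d) s a b :
  proj_state psi s a b = psi s a 0 * (psi s b 0)^*.
Proof. by rewrite /proj_state mxE big_ord1 !mxE. Qed.

Lemma proj_state_entry_derivable (psi : 'rV[R]_p -> 'cV[R[i]]_d) t v :
  cdifferentiable_at psi t -> forall a b,
  derivable (fun s => Re (proj_state psi s a b)) t v /\
  derivable (fun s => Im (proj_state psi s a b)) t v.
Proof.
move=> dpsi a b; have [Ra Ia] := dpsi a; have [Rb Ib] := dpsi b.
pose re c (s : 'rV[R]_p) := Re (psi s c 0); pose im c (s : 'rV[R]_p) := Im (psi s c 0).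
have der f : differentiable f t -> derivable f t v by move=> df; exact: diff_derivable.
split.
- have -> : (fun s => Re (proj_state psi s a b)) = re a * re b + im a * im b.
    apply/funext => s; rewrite !fctE /re /im proj_state_entry.
    by case: (psi s a 0) => ? ?; case: (psi s b 0) => ? ? /=; ring.
  by apply: derivableD; apply: derivableM; exact: der.
- have -> : (fun s => Im (proj_state psi s a b)) = im a * re b - re a * im b.
    apply/funext => s; rewrite !fctE /re /im proj_state_entry.
    by case: (psi s a 0) => ? ?; case: (psi s b 0) => ? ? /=; ring.
  by apply: derivableB; apply: derivableM; exact: der.
Qed.

End TraceDerivative.

(* Equality in the Fisher bound forces every [M_m^(1/2) w_j] onto the line of
   [M_m^(1/2) v] with a real coefficient, so all the [<w_j, M_m w_k>] are real. *)
Lemma POVM_fisher_eq_real_gram (R : realType) (d p n : nat)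
    (M : 'I_n -> 'M[R[i]]_d) (v : 'cV[R[i]]_d) (w : 'I_p -> 'cV[R[i]]_d) :
  POVM M ->
  (forall j, \sum_(m < n) fisher_term (Re (mxform (M m) v v)) (Re (mxform (M m) v (w j)))
             = \sum_(m < n) Re (mxform (M m) (w j) (w j))) ->
  forall j k, Im (mxform 1%:M (w j) (w k)) = 0.
Proof.
move=> [Mpsd Msum] eqF.
have eq_term j m : fisher_term (Re (mxform (M m) v v)) (Re (mxform (M m) v (w j)))
                   = Re (mxform (M m) (w j) (w j)).
  have [_] := leif_sum (fun m (_ : true) => leif_eq (psd_fisher_term_le (Mpsd m) v (w j))).
  by rewrite eqF eqxx => /esym/forallP/(_ m)/eqP.
move=> j k; rewrite -Msum mxform_sum raddf_sum big1 // => m _.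
have [lj Hj] := psd_fisher_term_eq (Mpsd m) (eq_term j m).
have [lk Hk] := psd_fisher_term_eq (Mpsd m) (eq_term k m).
rewrite Hk (psd_mxformC (Mpsd m) (w j)) Hj (psd_mxform_real (Mpsd m) v).
by simpc; rewrite /=; ring.
Qed.

Section PureStateSLD.
Variables (R : realType) (p d : nat) (psi : 'rV[R]_p -> 'cV[R[i]]_d).
Variables (t : 'rV[R]_p) (L : 'I_p -> 'M[R[i]]_d).
Hypothesis psi_diff : cdifferentiable_at psi t.
Hypothesis L_SLD : forall j, is_SLD (proj_state psi) t j (L j).

Lemma mpartial_proj_stateE j : mpartial (proj_state psi) j t =
  2^-1 *: (psi t *m adj (L j *m psi t) + L j *m psi t *m adj (psi t)).
Proof. by have [herm ->] := L_SLD j; rewrite /proj_state adjM herm !mulmxA. Qed.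

Lemma Re_trace_mpartial_proj_state (X : 'M[R[i]]_d) j : psd X ->
  Re (\tr (mpartial (proj_state psi) j t *m X)) = Re (mxform X (psi t) (L j *m psi t)).
Proof.
move=> psdX; rewrite mpartial_proj_stateE -scalemxAl mxtraceZ mulmxDl mxtraceD.
rewrite -mulmxA trace_cV_mulmx -[L j *m psi t *m _ *m X]mulmxA trace_cV_mulmx.
rewrite -/(mxform X (L j *m psi t) (psi t)) -/(mxform X (psi t) (L j *m psi t)).
rewrite (psd_mxformC psdX (L j *m psi t)).
by case: (mxform X _ _) => z1 z2; simpc; rewrite /= expr0n addr0; field.
Qed.

Lemma derive_Re_trace_proj_state (X : 'M[R[i]]_d) j : psd X ->
  'D_(edir R j) (fun s => Re (\tr (proj_state psi s *m X))) t =
  Re (mxform X (psi t) (L j *m psi t)).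
Proof.
move=> psdX; rewrite derive_Re_trace ?Re_trace_mpartial_proj_state //.
exact: proj_state_entry_derivable.
Qed.

(* Differentiating [<psi, psi> = 1] kills the real part; [L j] being
   Hermitian kills the imaginary part. *)
Lemma sld_orthogonal j : (\forall s \near t, (adj (psi s) *m psi s) 0 0 = 1) ->
  mxform 1%:M (psi t) (L j *m psi t) = 0.
Proof.
move=> normalized.
have re0 : Re (mxform 1%:M (psi t) (L j *m psi t)) = 0.
  rewrite -(derive_Re_trace_proj_state j (@psd1 R d)).
  rewrite (near_eq_derive (g := cst (1 : R))) ?derive_cst //.
  by apply: filterS normalized => s ns; rewrite mulmx1 /proj_state trace_cV_mulmx ns.
have real : (mxform 1%:M (psi t) (L j *m psi t))^* = mxform 1%:M (psi t) (L j *m psi t).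
  have -> : mxform 1%:M (psi t) (L j *m psi t) = mxform (L j) (psi t) (psi t).
    by rewrite /mxform mulmx1 mulmxA.
  by rewrite conj_mxform (L_SLD j).1.
move: re0 real; case: (mxform _ _ _) => x y /= -> [yy].
by apply/eqP; rewrite eq_complex /= eqxx /=; apply/eqP; lra.
Qed.

Lemma sld_R_free : R_lin_indep (fun j => mpartial (proj_state psi) j t) ->
  R_free (fun j => L j *m psi t).
Proof.
move=> nondeg c hc; apply: nondeg.
set u := \sum_(j < p) _ in hc.
suff -> : \sum_(j < p) (c j)%:C *: mpartial (proj_state psi) j t =
          2^-1 *: (psi t *m adj u + u *m adj (psi t)).
  by rewrite hc adj0 mulmx0 mul0mx addr0 scaler0.
rewrite adj_sum mulmx_sumr mulmx_suml -big_split scaler_sumr; apply: eq_bigr => j _ /=.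
rewrite adjZ [X in X *: adj _](_ : _ = (c j)%:C); last first.
  by apply/eqP; rewrite eq_complex /= oppr0 !eqxx.
rewrite mpartial_proj_stateE -scalemxAl -scalemxAr scalerA mulrC.
by rewrite -scalerA -scalerDr.
Qed.

Lemma SLD_info_diag n (M : 'I_n -> 'M[R[i]]_d) j : POVM M ->
  SLD_info (proj_state psi t) L j j =
  \sum_(m < n) Re (mxform (M m) (L j *m psi t) (L j *m psi t)).
Proof.
move=> [_ Msum]; rewrite mxE -raddf_sum -mxform_sum Msum /proj_state.
by rewrite mulmxA -mulmxA trace_cV_mulmx /mxform adjM (L_SLD j).1 mulmx1 mulmxA.
Qed.

Lemma fisher_info_diag n (M : 'I_n -> 'M[R[i]]_d) j : POVM M ->
  fisher_info (proj_state psi) M t j j =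
  \sum_(m < n) fisher_term (Re (mxform (M m) (psi t) (psi t)))
                           (Re (mxform (M m) (psi t) (L j *m psi t))).
Proof.
move=> [Mpsd _]; rewrite mxE big_mkcond; apply: eq_bigr => m _.
have -> : outcome_prob (proj_state psi) M m t = Re (mxform (M m) (psi t) (psi t)).
  by rewrite /outcome_prob /proj_state -mulmxA trace_cV_mulmx.
by rewrite /outcome_prob derive_Re_trace_proj_state.
Qed.

End PureStateSLD.

Theorem theorem4p3 (R : realType) (p d : nat)
  (Theta : set 'rV[R]_p) (psi : 'rV[R]_p -> 'cV[R[i]]_d) :
  open Theta ->
  (forall t, Theta t -> (adj (psi t) *m psi t) 0 0 = 1) ->
  (forall t, Theta t -> cdifferentiable_at psi t) ->
  (forall t, Theta t ->
     R_lin_indep (fun j => mpartial (proj_state psi) j t)) ->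
  forall (t : 'rV[R]_p), Theta t ->
  forall L : 'I_p -> 'M[R[i]]_d,
    (forall j, is_SLD (proj_state psi) t j (L j)) ->
    (exists (n : nat) (M : 'I_n -> 'M[R[i]]_d),
        POVM M /\
        fisher_info (proj_state psi) M t = SLD_info (proj_state psi t) L) ->
    (p <= d - 1)%N.
Proof.
move=> Theta_open normalized diff nondeg t Theta_t L SLD [n [M [POVM_M attained]]].
have near_normalized : \forall s \near t, (adj (psi s) *m psi s) 0 0 = 1.
  exact: filterS normalized (open_nbhs_nbhs (conj Theta_open Theta_t)).
have psi_t_neq0 : psi t != 0.
  apply/eqP => psi0; move: (normalized t Theta_t).
  by rewrite psi0 mulmx0 mxE => /eqP; rewrite eq_sym oner_eq0.
have gram_real : forall j k, Im (mxform 1%:M (L j *m psi t) (L k *m psi t)) = 0.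
  apply: (POVM_fisher_eq_real_gram (v := psi t) POVM_M) => j.
  rewrite -(fisher_info_diag (diff t Theta_t) SLD j POVM_M) attained.
  exact: SLD_info_diag.
have C_free_sld := real_gram_C_free gram_real (sld_R_free SLD (nondeg t Theta_t)).
have lt_pd := orthogonal_C_free_lt psi_t_neq0
  (fun j => sld_orthogonal (diff t Theta_t) SLD j near_normalized) C_free_sld.
by rewrite subn1 -ltnS prednK // (leq_ltn_trans (leq0n p)).
Qed.
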